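(* For every $n \ge 1$, $$ f^+_n(x) = \big(2(n-1)x - 1\big) f^+_{n-1}(x) + 2x(1-x) \frac{d f^+_{n-1}}{dx}(x) + 2(n-1)x\, f^+_{n-2}(x) + d^B_{n-1}(x), $$ with the convention $f^+_{-1}(x) = 0$.
   Context: A signed permutation of $[n]$ is a set $S = \{a_1, \dots, a_n\}$ with $a_i \in \{i, -i\}$, together with a bijection $w : S \to S$. - $a \in S$ is a $B$-excedance if $w(a) > a$, or if $a < 0$ and $w(a) = a$. - $w$ is a derangement if no $a \in S$ with $a > 0$ has $w(a) = a$. - $d^B_n(x) = \sum_{w \text{ derangement}} x^{\mathrm{exc}_B(w)}$, where $\mathrm{exc}_B(w)$ is the number of $B$-excedances, and $d^B_0 = 1$. - $f^+_n, f^-_n$ are the unique real polynomials with $d^B_n = f^+_n + f^-_n$, $f^+_n(x) = x^n f^+_n(1/x)$ and $f^-_n(x) = x^{n+1} f^-_n(1/x)$. *)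

From HB Require Import structures.
From mathcomp Require Import all_boot all_order all_algebra all_fingroup.
Set Implicit Arguments. Unset Strict Implicit. Unset Printing Implicit Defensive.
Import Order.TTheory GRing.Theory Num.Theory.
Local Open Scope ring_scope.

(* A signed permutation of [n]: the sign choice s (s i = true iff a_{i+1} = -(i+1))
   together with the bijection w : S -> S, encoded by sigma : w(a_i) = a_{sigma i}. *)
Definition signed_perm (n : nat) := ({ffun 'I_n -> bool} * {perm 'I_n})%type.

Definition sval n (s : {ffun 'I_n -> bool}) (i : 'I_n) : int :=
  if s i then - ((i.+1)%:Z) else (i.+1)%:Z.

Definition is_excB n (w : signed_perm n) (i : 'I_n) : bool :=
  (sval w.1 i < sval w.1 (w.2 i)) || ((sval w.1 i < 0) && (w.2 i == i)).

Definition excB n (w : signed_perm n) : nat := #|[pred i | is_excB w i]|.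

Definition derangementB n (w : signed_perm n) : bool :=
  [forall i, (0 < sval w.1 i) ==> (w.2 i != i)].

(* d^B_n(x) as a polynomial over R (d^B_0 = 1 automatically) *)
Definition dB (R : nzRingType) (n : nat) : {poly R} :=
  \sum_(w : signed_perm n | derangementB w) 'X^(excB w).

Definition palindromic (R : realFieldType) (k : nat) (p : {poly R}) : Prop :=
  forall x : R, x != 0 -> p.[x] = x ^+ k * p.[x^-1].

(* The proof has two independent halves.
   1. Combinatorics: d^B_(n+1) = x d^B_n + 2 (E_n d^B_n + n x d^B_(n-1)), where
      E_k p = k x p + x (1 - x) p' is the Eulerian operator ([dB_rec]).  A signed
      permutation of [n+1] is built from one of [n] by choosing the sign of the
      new largest letter and inserting it either as a fixed point or right after
      some letter a0 in its cycle; we track excedances and the derangement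
      condition through this insertion and sum the weights.
   2. Algebra: write "p is symmetric about k/2" ([coef_sym k p]) for the
      coefficient form of x^k p(1/x) = p(x).  E_k and multiplication by x or
      1 + x shift the centre of symmetry, and a polynomial symmetric about both
      k/2 and (k+1)/2 is zero.  Splitting the recurrence along d = f^+ + f^-
      shows that f^+_(n+1) minus the claimed right-hand side is symmetric about
      both (n+1)/2 and (n+2)/2, hence zero ([symmetric_part_rec]). *)
From Pilot Require Import Defs.
From HB Require Import structures.
From mathcomp Require Import all_boot all_order all_algebra all_fingroup.
From mathcomp Require Import zify ring.
Import Order.TTheory GRing.Theory Num.Theory.
Local Open Scope ring_scope.

Set Implicit Arguments. Unset Strict Implicit. Unset Printing Implicit Defensive.

Local Notation signed := Defs.sval.

Definition ext_sign n (i : 'I_n.+1) (b : bool) (s : {ffun 'I_n -> bool}) :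
  {ffun 'I_n.+1 -> bool} :=
  [ffun k => if unlift i k is Some j then s j else b].

Lemma ext_sign_id n (i : 'I_n.+1) b s : ext_sign i b s i = b.
Proof. by rewrite ffunE unlift_none. Qed.

Lemma ext_sign_lift n (i : 'I_n.+1) b s k : ext_sign i b s (lift i k) = s k.
Proof. by rewrite ffunE liftK. Qed.

Section Reindexing.
Variable M : nmodType.

(* The permutations of 'I_n.+1 sending i to j are exactly the lifts
   [lift_perm i j s] of the permutations s of 'I_n; the inverse [pinch i s]
   reads s off on the letters other than i. *)
Lemma sum_perm_mapsto n (i j : 'I_n.+1) (F : {perm 'I_n.+1} -> M) :
  \sum_(s : {perm 'I_n.+1} | s i == j) F s =
  \sum_(s : {perm 'I_n}) F (lift_perm i j s).
Proof.
rewrite (reindex (lift_perm i j)); last first.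
  pose pinch i (s : {perm 'I_n.+1}) k := odflt k (unlift (s i) (s (lift i k))).
  have pinchK i' (s : {perm 'I_n.+1}) k : lift (s i') (pinch i' s k) = s (lift i' k).
    rewrite /pinch; have:= neq_lift i' k.
    by rewrite -(can_eq (permK s)) => /unlift_some[] ? ? ->.
  have pinch_inj : injective (pinch i _).
    move=> s; apply: can_inj (pinch (s i) s^-1%g) _ => k'.
    by rewrite {1}/pinch pinchK !permK liftK.
  exists (fun s => perm (pinch_inj s)) => [s _ | s].
    by apply/permP=> k'; rewrite permE /pinch lift_perm_lift lift_perm_id liftK.
  move/(s _ =P _) => si0; apply/permP=> k.
  case: (unliftP i k) => [k'|] ->; rewrite ?lift_perm_id //.
  by rewrite lift_perm_lift -si0 permE pinchK.
by apply: eq_bigl => s; rewrite lift_perm_id eqxx.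
Qed.

Lemma sum_sign_fixed n (i : 'I_n.+1) b (F : {ffun 'I_n.+1 -> bool} -> M) :
  \sum_(s : {ffun 'I_n.+1 -> bool} | s i == b) F s =
  \sum_(s : {ffun 'I_n -> bool}) F (ext_sign i b s).
Proof.
rewrite (reindex (ext_sign i b)); last first.
  exists (fun s : {ffun 'I_n.+1 -> bool} => [ffun k => s (lift i k)]) => [s _ | s].
    by apply/ffunP => k; rewrite ffunE ext_sign_lift.
  move/eqP => si; apply/ffunP => k; rewrite ffunE.
  by case: (unliftP i k) => [k'|] ->; rewrite ?ffunE.
by apply: eq_bigl => s; rewrite ext_sign_id eqxx.
Qed.

(* Every permutation of 'I_n.+1 is obtained from a unique permutation s of
   'I_n (extended by the fixed point n) and a unique a, by inserting the new
   letter n after a in its cycle: a -> n -> s a (a = n gives a fixed point). *)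
Lemma sum_perm_insert_max n (F : {perm 'I_n.+1} -> M) :
  \sum_(s : {perm 'I_n.+1}) F s =
  \sum_(a : 'I_n.+1) \sum_(s : {perm 'I_n})
     F (tperm a ord_max * lift_perm ord_max ord_max s)%g.
Proof.
rewrite (partition_big (fun s : {perm 'I_n.+1} => s^-1 ord_max)%g xpredT) //=.
apply: eq_bigr => a _.
rewrite (reindex_inj (mulgI (tperm a ord_max))) /=.
rewrite -(sum_perm_mapsto ord_max ord_max (fun s => F (tperm a ord_max * s)%g)).
apply: eq_bigl => s.
rewrite invMg tpermV permM (can2_eq (tpermK _ _) (tpermK _ _)) tpermL.
by rewrite (canF_eq (permKV s)) eq_sym.
Qed.

Lemma sum_sign_split_max n (F : {ffun 'I_n.+1 -> bool} -> M) :
  \sum_(s : {ffun 'I_n.+1 -> bool}) F s =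
  \sum_(b : bool) \sum_(s : {ffun 'I_n -> bool}) F (ext_sign ord_max b s).
Proof.
rewrite (partition_big (fun s : {ffun 'I_n.+1 -> bool} => s ord_max) xpredT) //=.
by apply: eq_bigr => b _; rewrite -sum_sign_fixed.
Qed.

End Reindexing.

Lemma lift_ltn n (i : 'I_n.+1) x y : (lift i x < lift i y)%N = (x < y)%N.
Proof. by rewrite /= /bump; case: leqP; case: leqP; lia. Qed.

Lemma signed_lt0 n (s : {ffun 'I_n -> bool}) x : (signed s x < 0) = s x.
Proof. by rewrite /Defs.sval; case: (s x); rewrite ?oppr_lt0 ?ltz_nat. Qed.

Lemma signed_gt0 n (s : {ffun 'I_n -> bool}) x : (0 < signed s x) = ~~ s x.
Proof. by rewrite /Defs.sval; case: (s x); rewrite ?oppr_gt0 ?ltz_nat. Qed.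

(* Comparison of signed letters: negatives come first, in decreasing absolute value. *)
Lemma signed_lt n (s : {ffun 'I_n -> bool}) x y :
  (signed s x < signed s y) =
  if s x then s y ==> (y < x)%N else ~~ s y && (x < y)%N.
Proof.
rewrite /Defs.sval; case: (s x); case: (s y) => /=.
- by rewrite ltrN2 ltz_nat ltnS.
- by apply: (@lt_le_trans _ _ 0); rewrite ?oppr_lt0 ?ltz_nat.
- by apply/negbTE; rewrite -leNgt; apply: (@le_trans _ _ 0); rewrite ?oppr_le0 ?lez_nat.
- by rewrite ltz_nat ltnS.
Qed.

Lemma signed_lift_lt n (i : 'I_n.+1) b s x y :
  (signed (ext_sign i b s) (lift i x) < signed (ext_sign i b s) (lift i y)) =
  (signed s x < signed s y).
Proof. by rewrite !signed_lt !ext_sign_lift !lift_ltn. Qed.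

Lemma forall_lift n (j : 'I_n.+1) (P : pred 'I_n.+1) :
  [forall i, P i] = P j && [forall k, P (lift j k)].
Proof.
apply/forallP/andP => [H|[Hj /forallP H] i]; first by split => //; apply/forallP.
by case: (unliftP j i) => [k|] ->.
Qed.

Lemma excB_sum n (w : signed_perm n) : excB w = (\sum_i (is_excB w i : nat))%N.
Proof.
rewrite /excB -sum1_card big_mkcond /=.
by apply: eq_bigr => i _; rewrite inE; case: is_excB.
Qed.

Lemma is_excB_lift n (i : 'I_n.+1) b s (sg : {perm 'I_n}) k :
  is_excB (ext_sign i b s, lift_perm i i sg) (lift i k) = is_excB (s, sg) k.
Proof.
rewrite /is_excB /= lift_perm_lift signed_lift_lt !signed_lt0 !ext_sign_lift.
by rewrite (inj_eq lift_inj).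
Qed.

Lemma deranged_at_lift n (i : 'I_n.+1) b s (sg : {perm 'I_n}) k :
  ((0 < signed (ext_sign i b s) (lift i k)) ==> (lift_perm i i sg (lift i k) != lift i k))
  = ((0 < signed s k) ==> (sg k != k)).
Proof. by rewrite !signed_gt0 ext_sign_lift lift_perm_lift (inj_eq lift_inj). Qed.

Section InsertMax.
Variables (n : nat) (b : bool) (s : {ffun 'I_n -> bool}) (sg : {perm 'I_n}).
Let top := @ord_max n.
Let s' := ext_sign top b s.
Let sg' := lift_perm top top sg.

(* The new letter has the largest absolute value: it lies above every old
   letter iff it is positive. *)
Lemma signed_lt_top x : (signed s' (lift top x) < signed s' top) = ~~ b.
Proof.
rewrite signed_lt !ext_sign_lift /s' ext_sign_id lift_max /=.
by have := ltn_ord x; case: (s x); case: b => //= h; lia.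
Qed.

Lemma signed_top_lt y : (signed s' top < signed s' (lift top y)) = b.
Proof.
rewrite signed_lt !ext_sign_lift /s' ext_sign_id lift_max /=.
by have := ltn_ord y; case: (s y); case: b => //= h; lia.
Qed.

Lemma excB_fixed_top : excB (s', sg') = (excB (s, sg) + b)%N.
Proof.
rewrite !excB_sum (bigD1_ord top) //= addnC; congr addn.
  by apply: eq_bigr => k _; rewrite is_excB_lift.
by rewrite /is_excB /= /sg' lift_perm_id ltxx /= signed_lt0 /s' ext_sign_id eqxx andbT.
Qed.

Lemma derangementB_fixed_top : derangementB (s', sg') = derangementB (s, sg) && b.
Proof.
rewrite /derangementB (forall_lift top) andbC /=; congr andb.
  by apply: eq_forallb => k; rewrite deranged_at_lift.
by rewrite /sg' lift_perm_id eqxx implybF signed_gt0 /s' ext_sign_id negbK.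
Qed.

Section InsertAfter.
Variable a0 : 'I_n.
Let a := lift top a0.
(* [ins] is sg with the new letter inserted after a0: a0 -> n -> sg a0. *)
Let ins := (tperm a top * sg')%g.

Lemma ins_top : ins top = lift top (sg a0).
Proof. by rewrite /ins permM tpermR /sg' lift_perm_lift. Qed.

Lemma ins_a : ins a = top.
Proof. by rewrite /ins permM tpermL /sg' lift_perm_id. Qed.

Lemma ins_lift k : k != a0 -> ins (lift top k) = lift top (sg k).
Proof.
move=> hk; have ak : a != lift top k by rewrite /a (inj_eq lift_inj) eq_sym.
by rewrite /ins permM tpermD ?neq_lift // /sg' lift_perm_lift.
Qed.

(* Exactly one of a0 -> n and n -> sg a0 is an excedance, and it replaces the
   possible excedance a0 -> sg a0. *)
Lemma excB_insert_after : (excB (s', ins) + is_excB (s, sg) a0 = (excB (s, sg)).+1)%N.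
Proof.
rewrite !excB_sum (bigD1_ord top) //= (bigD1_ord a0) //= (bigD1_ord a0 (P := predT)) //=.
have -> : \sum_(i < n.-1) (is_excB (s', ins) (lift top (lift a0 i)) : nat)
     = \sum_(i < n.-1) (is_excB (s, sg) (lift a0 i) : nat).
  apply: eq_bigr => k _.
  rewrite /is_excB /= ins_lift; last by rewrite eq_sym neq_lift.
  by rewrite signed_lift_lt !signed_lt0 /s' !ext_sign_lift (inj_eq lift_inj).
have exc_top : is_excB (s', ins) top = b.
  rewrite /is_excB /= ins_top signed_top_lt signed_lt0 /s' ext_sign_id.
  by rewrite lift_eqF andbF orbF.
have exc_a : is_excB (s', ins) (lift top a0) = ~~ b.
  by rewrite /is_excB /= -/a ins_a signed_lt_top (negbTE (neq_lift _ _)) andbF orbF.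
rewrite exc_top exc_a; case: b; case: is_excB => /=;
  by rewrite ?add0n ?addn0 ?add1n ?addn1 ?addSn ?addnS.
Qed.

(* After insertion a0 is no longer a fixed point, so only the old letters
   other than a0 must satisfy the derangement condition. *)
Lemma derangementB_insert_after : derangementB (s', ins) =
  [forall k, (k != a0) ==> ((0 < signed s k) ==> (sg k != k))].
Proof.
rewrite /derangementB (forall_lift top) /= ins_top lift_eqF implybT /=.
apply: eq_forallb => k; case: (eqVneq k a0) => [->|hk] /=.
  by rewrite -/a ins_a /a neq_lift implybT.
by rewrite ins_lift // !signed_gt0 /s' ext_sign_lift (inj_eq lift_inj).
Qed.

End InsertAfter.
End InsertMax.

Definition prev_term (V : nmodType) (f : nat -> V) (n : nat) : V :=
  if n is j.+1 then f j else 0.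

Definition euler (R : nzRingType) (k : nat) (p : {poly R}) : {poly R} :=
  (k%:R *: 'X) * p + ('X * (1 - 'X)) * p^`().

Section Recurrence.
Variable R : comNzRingType.

Definition weight n (w : signed_perm n) : {poly R} :=
  if derangementB w then 'X^(excB w) else 0.

Lemma dB_weight_sum n :
  dB R n = \sum_(s : {ffun 'I_n -> bool}) \sum_(sg : {perm 'I_n}) weight (s, sg).
Proof. by rewrite /dB big_mkcond /= pair_bigA /=; apply: eq_bigr => -[s sg] _. Qed.

(* [insert_weight w a0] is x^exc of the permutation obtained by inserting the
   new letter after a0, and [deranged_off w a0] is its derangement condition. *)
Definition insert_weight n (w : signed_perm n) (a0 : 'I_n) : {poly R} :=
  if is_excB w a0 then 'X^(excB w) else 'X^((excB w).+1).

Definition deranged_off n (w : signed_perm n) (a0 : 'I_n) : bool :=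
  [forall k, (k != a0) ==> ((0 < signed w.1 k) ==> (w.2 k != k))].

(* The permutations that are not derangements but become one after insertion:
   a0 is a positive fixed point and there is no other one. *)
Definition fixed_weight n (w : signed_perm n) (a0 : 'I_n) : {poly R} :=
  if [&& ~~ w.1 a0, w.2 a0 == a0 & deranged_off w a0] then 'X^((excB w).+1) else 0.

Lemma weight_fixed_top n s (sg : {perm 'I_n}) b :
  weight (ext_sign ord_max b s, lift_perm ord_max ord_max sg) =
  if b then 'X * weight (s, sg) else 0.
Proof.
rewrite /weight derangementB_fixed_top excB_fixed_top.
by case: b; case: derangementB; rewrite /= ?mulr0 // addn1 exprS.
Qed.

Lemma weight_insert_after n s (sg : {perm 'I_n}) b a0 :
  weight (ext_sign ord_max b s, tperm (lift ord_max a0) ord_max * lift_perm ord_max ord_max sg)%g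
  = if deranged_off (s, sg) a0 then insert_weight (s, sg) a0 else 0.
Proof.
rewrite /weight derangementB_insert_after /deranged_off /insert_weight /=; case: ifP => // _.
have := excB_insert_after b s sg a0.
by case: is_excB => /= h; congr (_ ^+ _); lia.
Qed.

Lemma deranged_off_split n (w : signed_perm n) a0 :
  deranged_off w a0 =
  derangementB w || [&& ~~ w.1 a0, w.2 a0 == a0 & deranged_off w a0].
Proof.
case: (boolP (derangementB w)) => der_w /=.
  by apply/forallP => k; apply/implyP => _; exact: (forallP der_w k).
apply/idP/idP => [off_w|]; last by case/and3P.
rewrite off_w andbT; apply: contraNT der_w => not_fix; apply/forallP => k.
case: (eqVneq k a0) => [->|k_a0]; last exact: (implyP (forallP off_w k) k_a0).
by rewrite signed_gt0; apply/implyP => pos; apply: contra not_fix => ->; rewrite pos.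
Qed.

Lemma weight_insert_after_split n (w : signed_perm n) a0 :
  (if deranged_off w a0 then insert_weight w a0 else 0) =
  (if derangementB w then insert_weight w a0 else 0) + fixed_weight w a0.
Proof.
rewrite /fixed_weight [in LHS]deranged_off_split.
case: (boolP (derangementB w)) => [der_w|_] /=.
  have := forallP der_w a0; rewrite signed_gt0.
  by case: (w.1 a0); case: (w.2 a0 == a0); rewrite /= ?addr0.
rewrite add0r; case: ifP => // /and3P[pos_a0 /eqP fix_a0 _].
by rewrite /insert_weight /is_excB fix_a0 ltxx signed_lt0 (negbTE pos_a0).
Qed.

Lemma sum_weight_insert n (s : {ffun 'I_n -> bool}) (sg : {perm 'I_n}) :
  \sum_(b : bool) \sum_(a : 'I_n.+1)
     weight (ext_sign ord_max b s, tperm a ord_max * lift_perm ord_max ord_max sg)%g =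
  'X * weight (s, sg) +
  (\sum_(a0 < n) (if derangementB (s, sg) then insert_weight (s, sg) a0 else 0)
   + \sum_(a0 < n) fixed_weight (s, sg) a0) *+ 2.
Proof.
have sum_a b : \sum_(a : 'I_n.+1)
     weight (ext_sign ord_max b s, tperm a ord_max * lift_perm ord_max ord_max sg)%g =
   (if b then 'X * weight (s, sg) else 0) +
   (\sum_(a0 < n) (if derangementB (s, sg) then insert_weight (s, sg) a0 else 0)
    + \sum_(a0 < n) fixed_weight (s, sg) a0).
  rewrite (bigD1_ord ord_max) //= tperm1 mul1g weight_fixed_top -big_split /=.
  by congr (_ + _); apply: eq_bigr => a0 _; rewrite weight_insert_after weight_insert_after_split.
by rewrite big_bool /= !sum_a add0r mulr2n [RHS]addrA.
Qed.

Lemma sum_insert_weight n (w : signed_perm n) :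
  \sum_(a0 < n) insert_weight w a0 = euler n ('X^(excB w)).
Proof.
have -> : \sum_(a0 < n) insert_weight w a0 = \sum_(a0 < n)
   ('X^((excB w).+1) + ('X^(excB w) - 'X^((excB w).+1)) *+ is_excB w a0).
  apply: eq_bigr => a0 _; rewrite /insert_weight.
  by case: is_excB; rewrite ?mulr1n ?mulr0n ?addr0 // addrC subrK.
rewrite big_split /= sumr_const card_ord sumrMnr -excB_sum /euler derivXn.
rewrite -mul_polyC polyC_natr.
by case: (excB w) => [|k] /=; rewrite ?exprS; ring.
Qed.

Lemma sum_insert_weight_derangements n :
  \sum_(s : {ffun 'I_n -> bool}) \sum_(sg : {perm 'I_n}) \sum_(a0 < n)
     (if derangementB (s, sg) then insert_weight (s, sg) a0 else 0) = euler n (dB R n).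
Proof.
rewrite /euler dB_weight_sum mulr_sumr raddf_sum mulr_sumr -big_split.
apply: eq_bigr => s _; rewrite mulr_sumr raddf_sum mulr_sumr -big_split.
apply: eq_bigr => sg _; rewrite /weight; case: ifP => _.
  exact: sum_insert_weight.
by rewrite big1 //= mulr0 raddf0 mulr0 addr0.
Qed.

(* A permutation of 'I_n.+1 whose only positive fixed point is a0 is a
   derangement of the other n letters with a0 added as a positive fixed point. *)
Lemma sum_fixed_weight_at n (a0 : 'I_n.+1) :
  \sum_(s : {ffun 'I_n.+1 -> bool}) \sum_(sg : {perm 'I_n.+1}) fixed_weight (s, sg) a0
  = 'X * dB R n.
Proof.
transitivity (\sum_(s : {ffun 'I_n.+1 -> bool} | s a0 == false)
   \sum_(sg : {perm 'I_n.+1} | sg a0 == a0)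
     (if deranged_off (s, sg) a0 then 'X^((excB (s, sg)).+1) else 0 : {poly R})).
  rewrite [RHS]big_mkcond; apply: eq_bigr => s _.
  case: (boolP (s a0)) => s_a0; first by rewrite big1 // => sg _; rewrite /fixed_weight s_a0.
  by rewrite [RHS]big_mkcond; apply: eq_bigr => sg _; rewrite /fixed_weight s_a0; case: eqP.
rewrite sum_sign_fixed dB_weight_sum mulr_sumr; apply: eq_bigr => s0 _.
rewrite sum_perm_mapsto mulr_sumr; apply: eq_bigr => sg0 _.
have off : deranged_off (ext_sign a0 false s0, lift_perm a0 a0 sg0) a0 = derangementB (s0, sg0).
  rewrite /deranged_off /= (forall_lift a0) eqxx /=.
  by apply: eq_forallb => k; rewrite lift_eqF /= deranged_at_lift.
have exc : excB (ext_sign a0 false s0, lift_perm a0 a0 sg0) = excB (s0, sg0).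
  rewrite !excB_sum (bigD1_ord a0) //= {1}/is_excB /= lift_perm_id ltxx.
  rewrite signed_lt0 ext_sign_id /= add0n.
  by apply: eq_bigr => k _; rewrite is_excB_lift.
by rewrite off exc /weight; case: derangementB; rewrite ?exprS ?mulr0.
Qed.

Lemma sum_fixed_weight n :
  \sum_(s : {ffun 'I_n -> bool}) \sum_(sg : {perm 'I_n}) \sum_(a0 < n) fixed_weight (s, sg) a0 =
  (n%:R *: 'X) * prev_term (dB R) n.
Proof.
case: n => [|n]; first by rewrite mulr0 big1 // => s _; rewrite big1 // => sg _; exact: big_ord0.
under eq_bigr do rewrite exchange_big.
rewrite exchange_big /= (eq_bigr _ (fun a0 _ => sum_fixed_weight_at a0)).
by rewrite sumr_const card_ord -mul_polyC polyC_natr /=; ring.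
Qed.

Lemma dB_rec n :
  dB R n.+1 = 'X * dB R n + (euler n (dB R n) + (n%:R *: 'X) * prev_term (dB R) n) *+ 2.
Proof.
rewrite -sum_insert_weight_derangements -sum_fixed_weight.
rewrite dB_weight_sum sum_sign_split_max exchange_big /=.
under eq_bigr => s _ do under eq_bigr => b _ do rewrite sum_perm_insert_max exchange_big.
under eq_bigr => s _ do rewrite exchange_big /=.
under eq_bigr => s _ do under eq_bigr => sg _ do rewrite sum_weight_insert.
rewrite dB_weight_sum mulr_sumr -big_split -sumrMnl -big_split /=.
apply: eq_bigr => s _.
by rewrite mulr_sumr -big_split -sumrMnl -big_split.
Qed.

End Recurrence.

(* [coef_sym k p]: p has degree at most k and p_i = p_(k-i), i.e. the
   coefficient form of x^k p(1/x) = p(x). *)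
Definition coef_sym (R : nzRingType) (k : nat) (p : {poly R}) : Prop :=
  forall i, p`_i = if (i <= k)%N then p`_(k - i) else 0.

Section CoefSym.
Variable R : comNzRingType.
Implicit Types (k : nat) (p q : {poly R}).

Lemma coef_sym_hi k p i : coef_sym k p -> (k < i)%N -> p`_i = 0.
Proof. by move=> sym_p ki; rewrite sym_p leqNgt ki. Qed.

Lemma coef_sym_mirror k p i j : coef_sym k p -> (i + j = k)%N -> p`_i = p`_j.
Proof. by move=> sym_p ijk; rewrite sym_p ifT; [congr (_`_ _); lia | lia]. Qed.

Lemma coef_symP k p :
  (forall i, (k < i)%N -> p`_i = 0) ->
  (forall i j, (i + j = k)%N -> p`_i = p`_j) -> coef_sym k p.
Proof. by move=> hi mirror i; case: leqP => ik; [apply: mirror; lia | apply: hi]. Qed.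

Lemma coef_sym0 k : coef_sym k (0 : {poly R}).
Proof. by move=> i; rewrite !coef0; case: ifP. Qed.

Lemma coef_symD k p q : coef_sym k p -> coef_sym k q -> coef_sym k (p + q).
Proof. by move=> sp sq i; rewrite !coefD sp sq; case: ifP; rewrite ?addr0. Qed.

Lemma coef_symZ k c p : coef_sym k p -> coef_sym k (c *: p).
Proof. by move=> sp i; rewrite !coefZ sp; case: ifP; rewrite ?mulr0. Qed.

Lemma coef_symB k p q : coef_sym k p -> coef_sym k q -> coef_sym k (p - q).
Proof. by move=> sp sq; apply: coef_symD => //; rewrite -scaleN1r; apply: coef_symZ. Qed.

Lemma coef_symMn k p j : coef_sym k p -> coef_sym k (p *+ j).
Proof. by move=> sp i; rewrite !coefMn sp; case: ifP; rewrite ?mul0rn. Qed.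

Lemma coef_symXM k p : coef_sym k p -> coef_sym k.+2 ('X * p).
Proof.
move=> sp; apply: coef_symP => [i ki|i j ijk]; rewrite !coefXM.
  by case: eqP => // _; apply: (coef_sym_hi sp); lia.
case: eqP => [i0|/eqP i0]; case: eqP => [j0|/eqP j0] //.
- by rewrite (coef_sym_hi sp) //; lia.
- by rewrite (coef_sym_hi sp) //; lia.
- by apply: (coef_sym_mirror sp); lia.
Qed.

Lemma coef_sym1XM k p : coef_sym k p -> coef_sym k.+1 ((1 + 'X) * p).
Proof.
move=> sp; apply: coef_symP => [i ki|i j ijk]; rewrite mulrDl mul1r !coefD !coefXM.
  rewrite (coef_sym_hi sp (i := i)); last lia.
  case: eqP => [|_]; rewrite ?addr0 // (coef_sym_hi sp (i := i.-1)) ?add0r //.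
  by case: i ki => [|i] ki //=; lia.
case: eqP => [i0|/eqP i0]; case: eqP => [j0|/eqP j0].
- lia.
- rewrite addr0 (coef_sym_hi sp (i := j)); last lia.
  by rewrite add0r; apply: (coef_sym_mirror sp); lia.
- rewrite addr0 (coef_sym_hi sp (i := i)); last lia.
  by rewrite add0r; apply: (coef_sym_mirror sp); lia.
- by rewrite addrC; congr (_ + _); apply: (coef_sym_mirror sp); lia.
Qed.

Lemma coef_euler k p i : (euler k p)`_i =
  if i is j.+1 then k%:R * p`_j + p`_j.+1 *+ j.+1 - p`_j *+ j else 0.
Proof.
rewrite /euler mulrBr mulr1 -scalerAl coefD coefZ mulrBl coefB -mulrA !coefXM.
case: i => [|[|i]] /=; rewrite ?mulr0 ?subrr ?addr0 ?subr0 ?coef_deriv //.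
by rewrite addrA.
Qed.

Lemma coef_sym_euler k p : coef_sym k p -> coef_sym k.+1 (euler k p).
Proof.
move=> sp; apply: coef_symP => [i ki|i j ijk]; rewrite !coef_euler.
  case: i ki => [|i] ki //.
  rewrite (coef_sym_hi sp (i := i)); last lia.
  rewrite (coef_sym_hi sp (i := i.+1)); last lia.
  by rewrite mulr0 mul0rn addr0 mul0rn subr0.
case: i ijk => [|i]; case: j => [|j] ijk //.
- rewrite (coef_sym_hi sp (i := j.+1)); last lia.
  have -> : k = j by lia.
  by rewrite mul0rn addr0 mulr_natl subrr.
- rewrite (coef_sym_hi sp (i := i.+1)); last lia.
  have -> : k = i by lia.
  by rewrite mul0rn addr0 mulr_natl subrr.
- have -> : k = (i + j).+1 by lia.
  rewrite (coef_sym_mirror sp (i := i) (j := j.+1)); last lia.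
  rewrite (coef_sym_mirror sp (i := i.+1) (j := j)); last lia.
  rewrite (coef_sym_mirror sp (i := j) (j := i.+1)); last lia.
  ring.
Qed.

Lemma coef_sym_prev c (f : nat -> {poly R}) n :
  (forall j, coef_sym (c + j) (f j)) -> coef_sym (c + n).+1 ('X * prev_term f n).
Proof.
move=> sf; case: n => [|n] /=; first by rewrite mulr0; apply: coef_sym0.
by rewrite addnS; apply: coef_symXM.
Qed.

(* A polynomial symmetric about both k/2 and (k+1)/2 vanishes: the two
   reflections generate a translation which pushes every coefficient past k. *)
Lemma coef_sym_eq0 k p : coef_sym k p -> coef_sym k.+1 p -> p = 0.
Proof.
move=> sk sk1.
have top_coefs d : (d <= k.+1)%N -> p`_(k.+1 - d) = 0.
  elim: d => [|d IH] dk; first by rewrite subn0 (coef_sym_hi sk).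
  rewrite (coef_sym_mirror sk (i := (k.+1 - d.+1)%N) (j := d)); last lia.
  rewrite (coef_sym_mirror sk1 (i := d) (j := (k.+1 - d)%N)); last lia.
  by apply: IH; lia.
apply/polyP => i; rewrite coef0.
case: (leqP i k.+1) => ik; last by rewrite (coef_sym_hi sk) //; lia.
by have := top_coefs (k.+1 - i)%N (leq_subr _ _); rewrite subKn.
Qed.

End CoefSym.

Lemma poly_eq_on_nonzero (R : numDomainType) (p q : {poly R}) :
  (forall x, x != 0 -> p.[x] = q.[x]) -> p = q.
Proof.
move=> pq; apply/eqP; rewrite -subr_eq0; apply/eqP.
apply: (@roots_geq_poly_eq0 _ _ [seq (i.+1)%:R | i <- iota 0 (size (p - q))]).
- apply/allP => _ /mapP[i _ ->]; apply/eqP.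
  by rewrite hornerD hornerN pq ?subrr // pnatr_eq0.
- by rewrite map_inj_uniq ?iota_uniq // => i j /eqP; rewrite eqr_nat eqSS => /eqP.
- by rewrite size_map size_iota.
Qed.

Lemma horner_reversal (R : fieldType) (p : {poly R}) N (x : R) : (size p <= N.+1)%N -> x != 0 ->
  (\poly_(i < N.+1) p`_(N - i)).[x] = x ^+ N * p.[x^-1].
Proof.
move=> sizep x0; rewrite horner_poly (horner_coef_wide _ sizep) mulr_sumr.
rewrite (reindex_inj rev_ord_inj) /=; apply: eq_bigr => i _; rewrite subSS.
have iN : (i <= N)%N by rewrite -ltnS.
have xN : x ^+ N = x ^+ (N - i) * x ^+ i by rewrite -exprD subnK.
rewrite subKn // xN exprVn -mulrA (mulrCA (x ^+ i)) mulfV ?expf_neq0 //.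
by rewrite mulr1 mulrC.
Qed.

Lemma coef_sym_palindromic (R : realFieldType) k (p : {poly R}) : palindromic k p -> coef_sym k p.
Proof.
move=> pal_p i; pose N := (size p + k)%N.
have rev_p : 'X^(N - k) * p = \poly_(j < N.+1) p`_(N - j).
  apply: poly_eq_on_nonzero => x x0.
  rewrite hornerM hornerXn pal_p // horner_reversal //; last by rewrite leqW // leq_addr.
  by rewrite mulrA -exprD subnK // leq_addl.
have := congr1 (fun q : {poly R} => q`_(i + (N - k))) rev_p.
rewrite coefXnM coef_poly ltnNge leq_addl addnK /= => ->.
have -> : (i + (N - k) < N.+1)%N = (i <= k)%N by apply/idP/idP; lia.
by case: leqP => ik //; congr (_`_ _); lia.
Qed.

(* Abstract form of the argument: any sequence d satisfying the recurrence of
   [dB_rec] and split as d = p + m into a part p_n symmetric about n/2 and a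
   part m_n symmetric about (n+1)/2 has a symmetric part obeying the
   recurrence of the theorem. *)
Section SymmetricPartRecurrence.
Variables (R : comNzRingType) (d p m : nat -> {poly R}).
Hypothesis d_rec : forall n,
  d n.+1 = 'X * d n + (euler n (d n) + (n%:R *: 'X) * prev_term d n) *+ 2.
Hypothesis d_split : forall n, d n = p n + m n.
Hypothesis p_sym : forall n, coef_sym n (p n).
Hypothesis m_sym : forall n, coef_sym n.+1 (m n).

Lemma symmetric_part_rec n :
  p n.+1 =
    ((2 * n)%:R *: 'X - 1) * p n
    + (2%:R *: ('X * (1 - 'X))) * (p n)^`()
    + ((2 * n)%:R *: 'X) * prev_term p n
    + d n.
Proof.
set g := (X in _ = X).
have prev_split : prev_term d n = prev_term p n + prev_term m n.
  by case: n {g} => [|j] /=; rewrite ?addr0.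
(* g is symmetric about (n+1)/2 ... *)
have g_sym : coef_sym n.+1 g.
  have -> : g = euler n (p n) *+ 2 + 'X * prev_term p n *+ (2 * n) + m n.
    rewrite /g /euler d_split -!mul_polyC !polyC_natr; ring.
  apply: coef_symD => //; apply: coef_symD; apply: coef_symMn.
    exact: coef_sym_euler.
  exact: (coef_sym_prev (c := 0) n p_sym).
(* ... while d_(n+1) - g is symmetric about (n+2)/2. *)
have rest_sym : coef_sym n.+2 (d n.+1 - g).
  have -> : d n.+1 - g = 'X * p n + euler n.+1 (m n) *+ 2 - (1 + 'X) * m n
                         + 'X * prev_term m n *+ (2 * n).
    rewrite d_rec prev_split /g /euler !d_split derivD -!mul_polyC !polyC_natr; ring.
  apply: coef_symD; last by apply: coef_symMn; exact: (coef_sym_prev (c := 1) n m_sym).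
  apply: coef_symB; last exact: coef_sym1XM.
  by apply: coef_symD; [apply: coef_symXM | apply: coef_symMn; apply: coef_sym_euler].
apply/eqP; rewrite -subr_eq0; apply/eqP; apply: (coef_sym_eq0 (k := n.+1)).
  exact: coef_symB.
have -> : p n.+1 - g = (d n.+1 - g) - m n.+1 by rewrite d_split; ring.
exact: coef_symB.
Qed.

End SymmetricPartRecurrence.

Unset Implicit Arguments. Set Strict Implicit.

Theorem proposition7p8 (R : realFieldType) (fp fm : nat -> {poly R})
  (hdec : forall n, dB R n = fp n + fm n)
  (hp : forall n, palindromic n (fp n))
  (hm : forall n, palindromic n.+1 (fm n)) :
  forall n : nat,
    fp n.+1 =
      ((2 * n)%:R *: 'X - 1) * fp n
      + (2%:R *: ('X * (1 - 'X))) * (fp n)^`()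
      + ((2 * n)%:R *: 'X) * (if n is m.+1 then fp m else 0)
      + dB R n.
Proof.
move=> n; apply: (symmetric_part_rec (d := dB R)) => {n} n.
- exact: dB_rec.
- exact: hdec.
- exact: coef_sym_palindromic.
- exact: coef_sym_palindromic.
Qed.
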